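(* Let $Y$ be a topological space, $\mathcal X=(X_i)_{i\in I_Y}$ a family of nonempty spaces, and let $\widetilde Y$ be a space containing $Y$ as a dense subspace and, for each $i\in I_Y$, $\widetilde X_i$ a space containing $X_i$ as a subspace; put $\widetilde{\mathcal X}=(\widetilde X_i)_{i\in I_Y}$ (note $I_Y=I_{\widetilde Y}$). Then $Z(Y,\mathcal X)$ is a subspace of $Z(\widetilde Y,\widetilde{\mathcal X})$ and \[ \mathrm{Compl}\big(Z(Y,\mathcal X),Z(\widetilde Y,\widetilde{\mathcal X})\big)=\max\Big\{\mathrm{Compl}(Y,\widetilde Y),\ \sup_{i\in I_Y}\mathrm{Compl}(X_i,\widetilde X_i)\Big\}, \] whenever at least one of the two sides is defined (in which case both are).
   Context: All spaces are Tychonoff. For a space $Y$, $I_Y$ denotes its set of isolated points and $Y'=Y\setminus I_Y$. Zoom space: for a space $Y$ and a family $\mathcal X=(X_i)_{i\in I_Y}$ of nonempty pairwise disjoint spaces (disjoint from $Y'$), $Z(Y,\mathcal X)$ is the set $Y'\cup\bigcup_{i\in I_Y}X_i$ with the topology whose basis consists of all open subsets of the $X_i$, $i\in I_Y$, and all sets $V_U=(U\setminus I_Y)\cup\bigcup\{X_i: i\in U\cap I_Y\}$ for $U$ open in $Y$. $\mathcal F$-Borel hierarchy: $\mathcal F_0(Y)$ closed sets; for $0<\alpha<\omega_1$, $\mathcal F_\alpha(Y)$ is the family of countable unions (if $\alpha$ odd) or countable intersections (if $\alpha$ even) of members of $\bigcup_{\beta<\alpha}\mathcal F_\beta(Y)$,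 where $\lambda+m$ ($\lambda$ limit or 0, $m\in\omega$) has the parity of $m$; $\mathcal F_{\omega_1}(Y)$ is the family of Suslin-$\mathcal F$ sets $\bigcup_{\sigma\in\omega^\omega}\bigcap_k F_{\sigma(0),\dots,\sigma(k)}$ ($F_{\dots}$ closed). For $A\subset B$, $\mathrm{Compl}(A,B)$ is the least $\alpha\le\omega_1$ with $A\in\mathcal F_\alpha(B)$ (defined iff $A\in\mathcal F_{\omega_1}(B)$). *)

From Stdlib Require Import Reals List.
Open Scope R_scope.
Unset Implicit Arguments.

Definition set (T : Type) := T -> Prop.
Definition subset {T} (A B : set T) := forall x, A x -> B x.

Definition is_topology {T} (S : set T) (O : set (set T)) : Prop :=
  (forall U, O U -> subset U S) /\
  O S /\ O (fun _ => False) /\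
  (forall F : set (set T), (forall U, F U -> O U) ->
      O (fun x => exists U, F U /\ U x)) /\
  (forall U V, O U -> O V -> O (fun x => U x /\ V x)).

Definition sub_top {T} (O : set (set T)) (A : set T) : set (set T) :=
  fun V => exists U, O U /\ forall x, V x <-> (A x /\ U x).

Definition closed_in {T} (S : set T) (O : set (set T)) (F : set T) : Prop :=
  subset F S /\ O (fun x => S x /\ ~ F x).

Definition dense_in {T} (S : set T) (O : set (set T)) (A : set T) : Prop :=
  subset A S /\ forall U, O U -> (exists x, U x) -> exists x, U x /\ A x.

Definition isolated {T} (S : set T) (O : set (set T)) (y : T) : Prop :=
  S y /\ O (fun z => z = y).

Definition continuous_R {T} (S : set T) (O : set (set T)) (f : T -> R) : Prop :=
  forall x, S x -> forall eps, eps > 0 ->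
    exists U, O U /\ U x /\ forall y, U y -> Rabs (f y - f x) < eps.

Definition tychonoff {T} (S : set T) (O : set (set T)) : Prop :=
  is_topology S O /\
  (forall x, S x -> closed_in S O (fun z => z = x)) /\
  (forall F x, closed_in S O F -> S x -> ~ F x ->
     exists f : T -> R, continuous_R S O f /\
       (forall y, S y -> 0 <= f y <= 1) /\ f x = 0 /\ (forall y, F y -> f y = 1)).

(* Countable ordinals: well-orders on subsets of nat, compared by the  *)
(* existence of strictly increasing maps.  omega_1 is added on top.     *)
Record cord := {
  cdom : set nat;
  clt : nat -> nat -> Prop;
  clt_irrefl : forall x, ~ clt x x;
  clt_trans : forall x y z, clt x y -> clt y z -> clt x z;
  clt_total : forall x y, cdom x -> cdom y -> x = y \/ clt x y \/ clt y x;
  clt_wf : forall P : set nat, (exists x, cdom x /\ P x) ->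
     exists m, cdom m /\ P m /\ forall y, cdom y -> P y -> ~ clt y m
}.

Definition ole (a b : cord) : Prop :=
  exists f : nat -> nat,
    (forall x, cdom a x -> cdom b (f x)) /\
    (forall x y, cdom a x -> cdom a y -> clt a x y -> clt b (f x) (f y)).
Definition olt (a b : cord) : Prop := ole a b /\ ~ ole b a.

Definition ozero (a : cord) : Prop := forall x, ~ cdom a x.
Definition osucc (b a : cord) : Prop :=
  olt b a /\ forall c, olt b c -> ole a c.

(* parity: lambda + m has the parity of m *)
Inductive oeven : cord -> Prop :=
| oeven_lim : forall a, (forall b, ~ osucc b a) -> oeven a
| oeven_succ : forall a b, osucc b a -> oodd b -> oeven a
with oodd : cord -> Prop :=
| oodd_succ : forall a b, osucc b a -> oeven b -> oodd a.

(* ordinals <= omega_1 : Some a = countable ordinal a, None = omega_1 *)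
Definition ordw1 := option cord.
Definition ole1 (a b : ordw1) : Prop :=
  match a, b with
  | Some a', Some b' => ole a' b'
  | _, None => True
  | None, Some _ => False
  end.

Inductive Fclass {T} (S : set T) (O : set (set T)) : cord -> set T -> Prop :=
| Fclass0 : forall a A, ozero a -> closed_in S O A -> Fclass S O a A
| Fclass_odd : forall a A (An : nat -> set T), oodd a ->
    (forall n, exists b, olt b a /\ Fclass S O b (An n)) ->
    (forall x, A x <-> exists n, An n x) -> Fclass S O a A
| Fclass_even : forall a A (An : nat -> set T), ~ ozero a -> oeven a ->
    (forall n, exists b, olt b a /\ Fclass S O b (An n)) ->
    (forall x, A x <-> forall n, An n x) -> Fclass S O a A.

Definition suslinF {T} (S : set T) (O : set (set T)) (A : set T) : Prop :=
  exists F : list nat -> set T,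
    (forall s, s <> nil -> closed_in S O (F s)) /\
    forall x, A x <-> exists sigma : nat -> nat,
      forall k, F (map sigma (seq 0 (Nat.succ k))) x.

Definition Fw {T} (S : set T) (O : set (set T)) (a : ordw1) (A : set T) : Prop :=
  match a with
  | Some a' => Fclass S O a' A
  | None => suslinF S O A
  end.

Definition is_compl {T} (S : set T) (O : set (set T)) (A : set T) (c : ordw1) : Prop :=
  Fw S O c A /\ forall d, Fw S O d A -> ole1 c d.
Definition compl_defined {T} (S : set T) (O : set (set T)) (A : set T) : Prop :=
  Fw S O None A.

(* Zoom spaces.  For a space (S,O) on TY and spaces (SX i, OX i) on     *)
(* TX i, Z((S,O),(SX i,OX i)_i) lives on the tagged union below: inl y  *)
(* for y in S', inr (i,x) for i isolated and x in X_i.                  *)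
Definition zoomT (TY : Type) (TX : TY -> Type) : Type := (TY + {i : TY & TX i})%type.

Section Zoom.
Context {TY : Type} {TX : TY -> Type}.
Variables (S : set TY) (O : set (set TY))
          (SX : forall i, set (TX i)) (OX : forall i, set (set (TX i))).

Definition zoom_carrier : set (zoomT TY TX) := fun z =>
  match z with
  | inl y => S y /\ ~ isolated S O y
  | inr s => isolated S O (projT1 s) /\ SX (projT1 s) (projT2 s)
  end.

Definition zoom_V (U : set TY) : set (zoomT TY TX) := fun z =>
  match z with
  | inl y => U y /\ ~ isolated S O y
  | inr s => U (projT1 s) /\ isolated S O (projT1 s) /\ SX (projT1 s) (projT2 s)
  end.

Definition zoom_basis : set (set (zoomT TY TX)) := fun B =>
  (exists i (U : set (TX i)), isolated S O i /\ OX i U /\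
      forall z, B z <-> exists x, U x /\ z = inr (existT _ i x))
  \/ (exists U, O U /\ forall z, B z <-> zoom_V U z).

Definition zoom_open : set (set (zoomT TY TX)) := fun W =>
  subset W zoom_carrier /\
  forall z, W z -> exists B, zoom_basis B /\ B z /\ subset B W.
End Zoom.

(* Write Z = Z(Y, X) and Z~ = Z(Y~, X~).  Density and the T1 property give
   I_Y = I_Y~, so Z is the trace on Z~ of the "product" set Z(Y, (X_i)),
   and the basic open sets of the two zoom spaces have matching traces.

   Lower bound: the map Y~ -> Z~ that fixes non-isolated points and sends an
   isolated i into X_i, and each fibre inclusion X~_i -> Z~, are continuous
   and pull Z back to Y resp. X_i; continuous preimages preserve every class
   F_alpha and the Suslin-F sets.

   Upper bound: (B, (A_i)) |-> Z(B, (A_i)) maps closed sets to closed sets and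
   commutes with countable unions, countable intersections and the Suslin
   operation, so by induction on alpha it maps F_alpha(Y~) x prod_i
   F_alpha(X~_i) into F_alpha(Z~).  At even levels the levels of the pieces
   of the various X_i need not be bounded below alpha uniformly in i; this is
   repaired by re-indexing every decomposition along one fixed cofinal
   sequence of levels below alpha. *)

From Stdlib Require Import Reals List.
From Stdlib Require Import Classical ClassicalEpsilon ChoiceFacts FunctionalExtensionality PropExtensionality.
From Stdlib Require Cantor Eqdep.
Local Open Scope nat_scope.

Lemma set_ext {T} (A B : set T) : (forall x, A x <-> B x) -> A = B.
Proof.
  intro H; apply functional_extensionality; intro x.
  apply propositional_extensionality; auto.
Qed.

Definition ocut (a : cord) (y : nat) : cord.
Proof.
  refine {| cdom := fun v => cdom a v /\ clt a v y; clt := clt a |}.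
  - apply clt_irrefl.
  - apply clt_trans.
  - intros x z [Hx _] [Hz _]; apply clt_total; auto.
  - intros P [x [[Hx Hxy] HP]].
    destruct (clt_wf a (fun v => clt a v y /\ P v)) as [m [Hm [[Hmy HPm] Hmin]]];
      [exists x; auto|].
    exists m; split; [auto|split; auto].
    intros z [Hz Hzy] HPz; apply Hmin; auto.
Defined.

Definition ord0 : cord.
Proof.
  refine {| cdom := fun _ => False; clt := lt |}.
  - exact Nat.lt_irrefl.
  - exact Nat.lt_trans.
  - intros x y [].
  - intros P [x [[] _]].
Defined.

Definition cmin (c : cord) (P : nat -> Prop) : nat :=
  epsilon (inhabits 0)
    (fun m => cdom c m /\ P m /\ forall z, cdom c z -> P z -> ~ clt c z m).

Lemma cmin_spec c P : (exists z, cdom c z /\ P z) ->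
  cdom c (cmin c P) /\ P (cmin c P) /\
  forall z, cdom c z -> P z -> ~ clt c z (cmin c P).
Proof. intro H; unfold cmin; apply epsilon_spec, clt_wf, H. Qed.

Lemma clt_nlt_trans c x y z : cdom c x -> cdom c y ->
  ~ clt c y x -> clt c y z -> clt c x z.
Proof.
  intros Hx Hy Hyx Hyz.
  destruct (clt_total c x y Hx Hy) as [->|[Hxy|Hyx']];
    [exact Hyz | eapply clt_trans; eauto | contradiction].
Qed.

Lemma ole_trans a b c : ole a b -> ole b c -> ole a c.
Proof.
  intros [f [Hf1 Hf2]] [g [Hg1 Hg2]]; exists (fun x => g (f x)); split; auto.
Qed.

Lemma olt_ole_trans a b c : olt a b -> ole b c -> olt a c.
Proof.
  intros [H1 H2] H3; split; [eapply ole_trans; eauto|].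
  intro H4; apply H2; eapply ole_trans; eauto.
Qed.

Lemma ozero_ole a b : ozero a -> ole a b.
Proof. intro H; exists (fun x => x); split; intros; exfalso; eapply H; eauto. Qed.

Lemma ozero_ord0 : ozero ord0.
Proof. intros x H; exact H. Qed.

Lemma ocut_ole a y : ole (ocut a y) a.
Proof. exists (fun x => x); split; simpl; intuition. Qed.

Lemma increasing_not_below a h :
  (forall x, cdom a x -> cdom a (h x)) ->
  (forall x y, cdom a x -> cdom a y -> clt a x y -> clt a (h x) (h y)) ->
  forall x, cdom a x -> ~ clt a (h x) x.
Proof.
  intros H1 H2 x Hx Hc.
  destruct (clt_wf a (fun v => clt a (h v) v)) as [m [Hm [Hm2 Hm3]]];
    [exists x; auto|].
  apply (Hm3 (h m)); auto.
Qed.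

Lemma ocut_olt a y : cdom a y -> olt (ocut a y) a.
Proof.
  intro Hy; split; [apply ocut_ole|].
  intros [h [H1 H2]].
  apply (increasing_not_below a h) with y; auto.
  - intros x Hx; apply (H1 x Hx).
  - apply (H1 y Hy).
Qed.

Lemma ole_ocut_restrict a c w w' z : cdom a w -> clt a w w' ->
  ole (ocut a w') (ocut c z) ->
  exists z', cdom c z' /\ clt c z' z /\ ole (ocut a w) (ocut c z').
Proof.
  intros Hw Hww' [h [H1 H2]].
  assert (Hin : forall v, cdom a v -> clt a v w -> cdom (ocut a w') v)
    by (intros v Hv Hvw; split; [auto | eapply clt_trans; eauto]).
  destruct (H1 w (conj Hw Hww')) as [Hhw Hhwz].
  exists (h w); split; [auto | split; [auto|]].
  exists h; split.
  - intros v [Hv Hvw]; split; [exact (proj1 (H1 v (Hin v Hv Hvw)))|].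
    apply H2; [apply Hin | split |]; auto.
  - intros v v' [Hv Hvw] [Hv' Hvw']; apply H2; apply Hin; auto.
Qed.

(* Comparability of countable well-orders: send [y] to the least [z] with
   [a|y <= c|z].  Either this is defined on all of [a], and is then an
   embedding [a <= c], or it first fails at some [y0]; its restriction to
   [a|y0] is then unbounded in [c], and "least preimage above [z]" embeds
   [c] into [a|y0]. *)
Section Comparison.
Variables a c : cord.

Let below y z := ole (ocut a y) (ocut c z).
Let matched y := exists z, cdom c z /\ below y z.
Let image y := cmin c (below y).

Lemma image_lt w w' : cdom a w -> clt a w w' -> matched w' ->
  clt c (image w) (image w').
Proof.
  intros Hw Hww' Hm.
  destruct (cmin_spec c (below w') Hm) as [Hd' [Hb' _]].
  destruct (ole_ocut_restrict a c w w' _ Hw Hww' Hb') as [z [Hz [Hzlt Hb]]].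
  destruct (cmin_spec c (below w)) as [Hd [_ Hmin]]; [exists z; auto|].
  exact (clt_nlt_trans c _ _ _ Hd Hz (Hmin z Hz Hb) Hzlt).
Qed.

Lemma below_of_bound w z : cdom c z ->
  (forall v, cdom a v -> clt a v w -> matched v) ->
  (forall v, cdom a v -> clt a v w -> clt c (image v) z) ->
  below w z.
Proof.
  intros Hz Hm Hbd; exists image; split.
  - intros v [Hv Hvw]; split; [apply (cmin_spec c _ (Hm v Hv Hvw)) | auto].
  - intros v v' [Hv Hvw] [Hv' Hv'w] Hvv'; apply image_lt; auto.
Qed.

Lemma unbounded_ole y0 :
  (forall v, cdom a v -> clt a v y0 -> matched v) ->
  (forall z, cdom c z -> exists v, cdom (ocut a y0) v /\ ~ clt c (image v) z) ->
  ole c (ocut a y0).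
Proof.
  intros Hm Hunb.
  set (back z := cmin (ocut a y0) (fun v => ~ clt c (image v) z)).
  exists back; split; [intros z Hz; apply (cmin_spec _ _ (Hunb z Hz))|].
  intros z z' Hz Hz' Hzz'.
  destruct (cmin_spec _ _ (Hunb z Hz)) as [[Hw Hwy] [Hpw Hmw]].
  destruct (cmin_spec _ _ (Hunb z' Hz')) as [[Hw' Hwy'] [Hpw' Hmw']].
  fold (back z) in Hw, Hwy, Hpw, Hmw; fold (back z') in Hw', Hwy', Hpw', Hmw'.
  simpl in Hmw, Hmw'; simpl.
  destruct (clt_total a (back z) (back z') Hw Hw') as [E|[E|E]]; [exfalso| auto| exfalso].
  - (* then [image (back z) <= z < z'], against the choice of [back z'] *)
    rewrite <- E in Hpw'.
    assert (Hb : below (back z) z).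
    { apply below_of_bound; auto.
      - intros v Hv Hvw; apply Hm; auto; eapply clt_trans; eauto.
      - intros v Hv Hvw; apply NNPP; intro Hn.
        apply (Hmw v); [split; auto; eapply clt_trans; eauto | auto | auto]. }
    destruct (cmin_spec c (below (back z))) as [Hd [_ Hmin]]; [exists z; auto|].
    exact (Hpw' (clt_nlt_trans c _ _ _ Hd Hz (Hmin z Hz Hb) Hzz')).
  - apply (Hmw (back z')); [split; auto | | auto].
    intro Hc; apply Hpw'; eapply clt_trans; eauto.
Qed.

Lemma ocut_above_or_ole : (exists y, cdom a y /\ ole c (ocut a y)) \/ ole a c.
Proof.
  destruct (classic (forall y, cdom a y -> matched y)) as [Hall|Hn].
  - right; exists image; split.
    + intros y Hy; apply (cmin_spec c _ (Hall y Hy)).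
    + intros y y' Hy Hy' Hyy'; apply image_lt; auto.
  - left.
    destruct (clt_wf a (fun y => ~ matched y)) as [y0 [Hy0 [Hn0 Hmin]]].
    { apply NNPP; intro Hn'; apply Hn; intros y Hy; apply NNPP; intro Hc; apply Hn'; eauto. }
    assert (IH : forall v, cdom a v -> clt a v y0 -> matched v)
      by (intros v Hv Hlt; apply NNPP; intro Hc; exact (Hmin v Hv Hc Hlt)).
    exists y0; split; auto.
    apply unbounded_ole; auto.
    intros z Hz; apply NNPP; intro Hbd; apply Hn0; exists z; split; auto.
    apply below_of_bound; auto.
    intros v Hv Hvy; apply NNPP; intro Hc; apply Hbd; exists v; split; [split|]; auto.
Qed.
End Comparison.

Lemma ole_total a c : ole c a \/ ole a c.
Proof.
  destruct (ocut_above_or_ole a c) as [[y [_ H]]|H]; auto.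
  left; eapply ole_trans; eauto; apply ocut_ole.
Qed.

Lemma olt_ocut c a : olt c a -> exists y, cdom a y /\ ole c (ocut a y).
Proof.
  intros [H1 H2]; destruct (ocut_above_or_ole a c) as [H|H]; auto; contradiction.
Qed.

Lemma olt_wf : well_founded olt.
Proof.
  assert (Hcut : forall a y, cdom a y -> forall c, ole c (ocut a y) -> Acc olt c).
  { intro a; apply NNPP; intro Hn.
    destruct (clt_wf a (fun y => ~ forall c, ole c (ocut a y) -> Acc olt c))
      as [y0 [Hy0 [Hn0 Hmin]]].
    { apply NNPP; intro Hn'; apply Hn; intros y Hy; apply NNPP; intro Hc; apply Hn'; eauto. }
    apply Hn0; intros c Hc; constructor; intros c' Hc'.
    destruct (olt_ocut c' (ocut a y0) (olt_ole_trans _ _ _ Hc' Hc)) as [w [[Hw Hwy] Hle]].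
    apply NNPP; intro Hacc; apply (Hmin w Hw); auto.
    intro HH; apply Hacc, HH.
    eapply ole_trans; [exact Hle | exists (fun x => x); split; simpl; intuition]. }
  intro a; constructor; intros c Hc.
  destruct (olt_ocut c a Hc) as [y [Hy Hle]]; eapply Hcut; eauto.
Qed.

Definition oeq a b := ole a b /\ ole b a.

Lemma osucc_ole b a c : osucc b a -> olt c a -> ole c b.
Proof.
  intros [Hba Hs] Hca.
  destruct (ole_total b c) as [H|H]; [exact H|].
  destruct (classic (ole c b)) as [H'|H']; [exact H'|].
  exfalso; apply (proj2 Hca), Hs; split; auto.
Qed.

Lemma osucc_oeq b a a' : osucc b a -> oeq a a' -> osucc b a'.
Proof.
  intros [Hba Hs] [H1 H2]; split.
  - eapply olt_ole_trans; eauto.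
  - intros c Hc; eapply ole_trans; eauto.
Qed.

Lemma oeven_oeq a a' : oeven a -> oeq a a' -> oeven a'.
Proof.
  intros H [H1 H2]; destruct H as [a Hl | a b Hs Ho].
  - apply oeven_lim; intros b Hb; apply (Hl b), (osucc_oeq b a'); [exact Hb | split; auto].
  - eapply oeven_succ; [|exact Ho]; eapply osucc_oeq; [exact Hs | split; auto].
Qed.

Lemma oodd_oeq a a' : oodd a -> oeq a a' -> oodd a'.
Proof.
  intros H He; destruct H as [a b Hs Ho].
  eapply oodd_succ; [|exact Ho]; eapply osucc_oeq; eauto.
Qed.

Lemma osucc_nonzero b a : osucc b a -> ~ ozero a.
Proof. intros [[_ H] _] Hz; apply H, ozero_ole, Hz. Qed.

Lemma oodd_nonzero a : oodd a -> ~ ozero a.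
Proof. intro H; destruct H as [a b Hs _]; eapply osucc_nonzero; eauto. Qed.

Lemma oeven_oodd_excl a : oeven a -> oodd a -> False.
Proof.
  induction (olt_wf a) as [a _ IH]; intros He Ho.
  destruct Ho as [a b Hs Hb]; destruct He as [a Hl | a b' Hs' Hb'].
  - exact (Hl b Hs).
  - assert (E : oeq b' b)
      by (split; [apply (osucc_ole b a); [exact Hs | apply Hs']
                 | apply (osucc_ole b' a); [exact Hs' | apply Hs]]).
    apply (IH b); [apply Hs | exact Hb | eapply oodd_oeq; eauto].
Qed.

Lemma oeven_or_oodd a : oeven a \/ oodd a.
Proof.
  induction (olt_wf a) as [a _ IH].
  destruct (classic (exists b, osucc b a)) as [[b Hb]|Hn].
  - destruct (IH b (proj1 Hb)) as [H|H];
      [right; eapply oodd_succ | left; eapply oeven_succ]; eauto.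
  - left; apply oeven_lim; intros b Hb; apply Hn; eauto.
Qed.

Definition cofinal_below (lv : nat -> cord) (a : cord) : Prop :=
  (forall k, olt (lv k) a) /\ (forall b, olt b a -> exists k, ole b (lv k)).

Lemma cofinal_below_exists a : ~ ozero a -> exists lv, cofinal_below lv a.
Proof.
  intro Hnz.
  assert (Hy0 : exists y0, cdom a y0)
    by (apply NNPP; intro Hn; apply Hnz; intros x Hx; apply Hn; eauto).
  destruct Hy0 as [y0 Hy0].
  exists (fun k => ocut a (if excluded_middle_informative (cdom a k) then k else y0)).
  split.
  - intro k; destruct excluded_middle_informative; apply ocut_olt; auto.
  - intros b Hb; destruct (olt_ocut b a Hb) as [y [Hy Hle]].
    exists y; destruct excluded_middle_informative; [auto | contradiction].
Qed.

Section Fclass_theory.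
Context {T : Type} (S : set T) (O : set (set T)).

Lemma Fclass_ext a A A' : Fclass S O a A -> (forall x, A x <-> A' x) -> Fclass S O a A'.
Proof. intros H E; rewrite <- (set_ext _ _ E); exact H. Qed.

Lemma Fclass_oeq a a' A : Fclass S O a A -> oeq a a' -> Fclass S O a' A.
Proof.
  intros H [H1 H2]; destruct H as [a A Hz Hc | a A An Ho Hn E | a A An Hnz He Hn E].
  - apply Fclass0; auto; intros x Hx; destruct H2 as [f [Hf _]]; exact (Hz _ (Hf x Hx)).
  - apply Fclass_odd with An; [exact (oodd_oeq a a' Ho (conj H1 H2)) | | exact E].
    intro n; destruct (Hn n) as [b [Hb Hf]]; exists b; split; auto; eapply olt_ole_trans; eauto.
  - apply Fclass_even with An; [ | exact (oeven_oeq a a' He (conj H1 H2)) | | exact E].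
    + intro Hz; apply Hnz; intros x Hx; destruct H1 as [f [Hf _]]; exact (Hz _ (Hf x Hx)).
    + intro n; destruct (Hn n) as [b [Hb Hf]]; exists b; split; auto; eapply olt_ole_trans; eauto.
Qed.

(* Above its own level a set is a one-term union or intersection. *)
Lemma Fclass_mono a b A : Fclass S O a A -> ole a b -> Fclass S O b A.
Proof.
  intros H Hab.
  destruct (classic (ole b a)) as [Hba|Hba]; [eapply Fclass_oeq; eauto; split; auto|].
  destruct (oeven_or_oodd b) as [He|Ho].
  - apply Fclass_even with (fun _ => A); auto.
    + intro Hz; apply Hba, ozero_ole, Hz.
    + intro n; exists a; split; [split|]; auto.
    + intro x; split; [auto | intro Hx; exact (Hx 0)].
  - apply Fclass_odd with (fun _ => A); auto.
    + intro n; exists a; split; [split|]; auto.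
    + intro x; split; [intro Hx; exists 0; exact Hx | intros [_ Hx]; exact Hx].
Qed.

Lemma Fclass_closed b A : closed_in S O A -> Fclass S O b A.
Proof.
  intro H; apply Fclass_mono with ord0; [apply Fclass0, H | apply ozero_ole]; apply ozero_ord0.
Qed.

Lemma Fclass_ozero_closed a A : ozero a -> Fclass S O a A -> closed_in S O A.
Proof.
  intros Hz H; destruct H as [a A _ Hc | a A An Ho Hn E | a A An Hnz He Hn E];
    [exact Hc | exfalso; eapply oodd_nonzero; eauto | contradiction].
Qed.

Lemma Fclass_sub a : forall A, Fclass S O a A -> subset A S.
Proof.
  induction (olt_wf a) as [a _ IH]; intros A HA x Hx.
  destruct HA as [a A Hz [Hs _] | a A An Ho Hn E | a A An Hnz He Hn E].
  - exact (Hs x Hx).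
  - apply E in Hx as [n Hxn]; destruct (Hn n) as [b [Hb Hf]]; exact (IH b Hb _ Hf x Hxn).
  - destruct (Hn 0) as [b [Hb Hf]]; exact (IH b Hb _ Hf x (proj1 (E x) Hx 0)).
Qed.

Lemma Fclass_osucc_inv a b A : osucc b a -> oeven b -> Fclass S O a A ->
  exists An : nat -> set T,
    (forall n, Fclass S O b (An n)) /\ forall x, A x <-> exists n, An n x.
Proof.
  intros Hs Hb H; destruct H as [a A Hz Hc | a A An Ho Hn E | a A An Hnz He Hn E].
  - exfalso; eapply osucc_nonzero; eauto.
  - exists An; split; auto; intro n; destruct (Hn n) as [b' [Hb' Hf]].
    eapply Fclass_mono; eauto; eapply osucc_ole; eauto.
  - exfalso; apply (oeven_oodd_excl a); auto; eapply oodd_succ; eauto.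
Qed.

Hypothesis HS : is_topology S O.

Lemma closed_full : closed_in S O S.
Proof.
  split; [intros x; auto|].
  replace (fun x => S x /\ ~ S x) with (fun _ : T => False); [apply HS|].
  apply set_ext; intuition.
Qed.

(* The [k]-th copy of a piece is the piece itself if its level is at most
   [lv k], and the whole space [S] otherwise. *)
Lemma Fclass_even_cofinal a lv A : oeven a -> ~ ozero a -> cofinal_below lv a ->
  Fclass S O a A ->
  exists C : nat -> nat -> set T,
    (forall n k, Fclass S O (lv k) (C n k)) /\ forall x, A x <-> forall n k, C n k x.
Proof.
  intros He Hnz [_ Hcof] HA.
  destruct HA as [a A Hz Hc | a A An Ho Hn E | a A An Hnz' He' Hn E];
    [contradiction | exfalso; eapply oeven_oodd_excl; eauto |].
  set (fits n k := exists b, ole b (lv k) /\ Fclass S O b (An n)).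
  exists (fun n k x => S x /\ (fits n k -> An n x)); split.
  - intros n k; destruct (classic (fits n k)) as [[b [Hb Hf]] | Hnf].
    + apply Fclass_ext with (An n); [eapply Fclass_mono; eauto|].
      intro x; split; [|intros [_ H]; apply H; exists b; auto].
      intro Hx; split; [exact (Fclass_sub b _ Hf x Hx) | auto].
    + apply Fclass_ext with S; [apply Fclass_closed, closed_full|].
      intro x; split; [intro Hx; split; [exact Hx | contradiction] | tauto].
  - intro x; rewrite E; split.
    + intros H n k; split; [|auto].
      destruct (Hn n) as [b [_ Hf]]; exact (Fclass_sub b _ Hf x (H n)).
    + intros H n; destruct (Hn n) as [b [Hb Hf]].
      destruct (Hcof b Hb) as [k Hk]; apply (H n k); exists b; auto.
Qed.
End Fclass_theory.

Lemma open_of_local {T} (S : set T) (O : set (set T)) (P : set T) : is_topology S O ->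
  (forall x, P x -> exists U, O U /\ U x /\ subset U P) -> O P.
Proof.
  intros [_ [_ [_ [Hunion _]]]] H.
  replace P with (fun x => exists U, (fun U => O U /\ subset U P) U /\ U x).
  - apply Hunion; intros U [HU _]; exact HU.
  - apply set_ext; intro x; split.
    + intros [U [[_ Hs] Hux]]; auto.
    + intro Hx; destruct (H x Hx) as [U [HU [Hux Hs]]]; exists U; auto.
Qed.

Definition basis_open {T} (S : set T) (B : set (set T)) (W : set T) : Prop :=
  subset W S /\ forall z, W z -> exists U, B U /\ U z /\ subset U W.

Lemma basis_open_sub_top {T} (Sb A : set T) (Bb Bs : set (set T)) :
  (forall V, Bb V -> subset V Sb) ->
  (forall U, Bs U -> exists V, Bb V /\ forall z, U z <-> A z /\ V z) ->
  (forall V, Bb V -> exists U, Bs U /\ forall z, U z <-> A z /\ V z) ->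
  forall W, basis_open A Bs W <-> sub_top (basis_open Sb Bb) A W.
Proof.
  intros HbS Hsb Hbs W; split.
  - intros [HWA HW].
    exists (fun z => exists V, Bb V /\ V z /\ forall z', A z' -> V z' -> W z'); split.
    + split; [intros z [V [HV [Hz _]]]; exact (HbS V HV z Hz)|].
      intros z [V [HV [Hz HVW]]]; exists V; split; [auto | split; [auto|]].
      intros z' Hz'; exists V; auto.
    + intro z; split; [|intros [HzA [V [HV [HzV HVW]]]]; auto].
      intro Hz; split; [exact (HWA z Hz)|].
      destruct (HW z Hz) as [U [HU [HzU HUW]]]; destruct (Hsb U HU) as [V [HV EV]].
      exists V; split; [auto | split; [apply EV, HzU|]].
      intros z' Hz' HVz'; apply HUW, EV; auto.
  - intros [Wt [[_ HWt] EW]]; split; [intros z Hz; apply EW in Hz; tauto|].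
    intros z Hz; destruct (proj1 (EW z) Hz) as [HzA HzW].
    destruct (HWt z HzW) as [V [HV [HzV HVW]]]; destruct (Hbs V HV) as [U [HU EU]].
    exists U; split; [auto | split; [apply EU; auto|]].
    intros z' Hz'; apply EW; apply EU in Hz' as [HA HV']; auto.
Qed.

Section Preimage.
Context {T T' : Type} (S : set T) (O : set (set T)) (S' : set T') (O' : set (set T'))
  (f : T' -> T).
Hypothesis Hmap : forall x, S' x -> S (f x).
Hypothesis Hcont : forall U, O U -> O' (fun x => S' x /\ U (f x)).

Definition preim (A : set T) : set T' := fun x => S' x /\ A (f x).

Lemma closed_in_preim A : closed_in S O A -> closed_in S' O' (preim A).
Proof.
  intros [_ Ho]; split; [intros x [Hx _]; exact Hx|].
  replace (fun x => S' x /\ ~ preim A x)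
    with (fun x => S' x /\ (fun t => S t /\ ~ A t) (f x)); [exact (Hcont _ Ho)|].
  apply set_ext; intro x; unfold preim; split.
  - intros [Hx [_ Hn]]; split; auto; intros [_ Ha]; auto.
  - intros [Hx Hn]; split; auto.
Qed.

Lemma Fclass_preim a : forall A, Fclass S O a A -> Fclass S' O' a (preim A).
Proof.
  induction (olt_wf a) as [a _ IH]; intros A H.
  destruct H as [a A Hz Hc | a A An Ho Hn E | a A An Hnz He Hn E].
  - apply Fclass0, closed_in_preim; auto.
  - apply Fclass_odd with (fun n => preim (An n)); auto.
    + intro n; destruct (Hn n) as [b [Hb Hf]]; exists b; auto.
    + intro x; unfold preim; rewrite E; firstorder.
  - apply Fclass_even with (fun n => preim (An n)); auto.
    + intro n; destruct (Hn n) as [b [Hb Hf]]; exists b; auto.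
    + intro x; unfold preim; rewrite E; split; [intros [Hx H] n; auto|].
      intro H; split; [exact (proj1 (H 0)) | intro n; exact (proj2 (H n))].
Qed.

Lemma suslinF_preim A : suslinF S O A -> suslinF S' O' (preim A).
Proof.
  intros [F [Hc E]]; exists (fun s => preim (F s)); split.
  - intros s Hs; apply closed_in_preim; auto.
  - intro x; unfold preim; rewrite E; split.
    + intros [Hx [sg Hsg]]; exists sg; auto.
    + intros [sg Hsg]; split; [exact (proj1 (Hsg 0))|].
      exists sg; intro k; exact (proj2 (Hsg k)).
Qed.

Lemma Fw_preim a A : Fw S O a A -> Fw S' O' a (preim A).
Proof. destruct a; [apply Fclass_preim | apply suslinF_preim]. Qed.
End Preimage.

Lemma guarded_choice {I : Type} {B : I -> Type} (Q : I -> Prop) (P : forall i, B i -> Prop) :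
  (forall i, inhabited (B i)) -> (forall i, Q i -> exists b, P i b) ->
  exists f : forall i, B i, forall i, Q i -> P i (f i).
Proof.
  intros Hinh H; apply (non_dep_dep_functional_choice choice B (fun i b => Q i -> P i b)).
  intro i; destruct (classic (Q i)) as [Hq|Hq].
  - destruct (H i Hq) as [b Hb]; exists b; auto.
  - destruct (Hinh i) as [b]; exists b; contradiction.
Qed.

Definition cantor_fst (j : nat) : nat := fst (Cantor.of_nat j).
Definition cantor_snd (j : nat) : nat := snd (Cantor.of_nat j).

Lemma cantor_fst_pair n m : cantor_fst (Cantor.to_nat (n, m)) = n.
Proof. unfold cantor_fst; rewrite Cantor.cancel_of_to; reflexivity. Qed.

Lemma cantor_snd_pair n m : cantor_snd (Cantor.to_nat (n, m)) = m.
Proof. unfold cantor_snd; rewrite Cantor.cancel_of_to; reflexivity. Qed.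

Lemma forall_pairs (P : nat -> nat -> Prop) :
  (forall n m, P n m) <-> forall j, P (cantor_fst j) (cantor_snd j).
Proof.
  split; [auto|]; intros H n m.
  specialize (H (Cantor.to_nat (n, m))).
  rewrite cantor_fst_pair, cantor_snd_pair in H; exact H.
Qed.

Lemma exists_pairs (P : nat -> nat -> Prop) :
  (exists n m, P n m) <-> exists j, P (cantor_fst j) (cantor_snd j).
Proof.
  split; [|intros [j Hj]; eauto].
  intros [n [m H]]; exists (Cantor.to_nat (n, m)).
  rewrite cantor_fst_pair, cantor_snd_pair; exact H.
Qed.

Lemma exists_seq_pairs (P : (nat -> nat) -> (nat -> nat) -> Prop) :
  (exists s t, P s t) <->
  exists r, P (fun n => cantor_fst (r n)) (fun n => cantor_snd (r n)).
Proof.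
  split; [|intros [r Hr]; eauto].
  intros [s [t H]]; exists (fun n => Cantor.to_nat (s n, t n)).
  replace (fun n => cantor_fst (Cantor.to_nat (s n, t n))) with s
    by (apply functional_extensionality; intro; rewrite cantor_fst_pair; reflexivity).
  replace (fun n => cantor_snd (Cantor.to_nat (s n, t n))) with t
    by (apply functional_extensionality; intro; rewrite cantor_snd_pair; reflexivity).
  exact H.
Qed.

Section Zoom_sets.
Context {TY : Type} {TX : TY -> Type} (S : set TY) (O : set (set TY))
  (SX : forall i, set (TX i)) (OX : forall i, set (set (TX i))).
Hypothesis HtY : is_topology S O.
Hypothesis HtX : forall i, isolated S O i -> is_topology (SX i) (OX i).

Let Z := zoom_carrier S O SX.
Let OZ := zoom_open S O SX OX.

Definition fibre_set (i : TY) (U : set (TX i)) : set (zoomT TY TX) :=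
  fun z => exists x, U x /\ z = inr (existT _ i x).

Lemma fibre_set_basis i U : isolated S O i -> OX i U -> zoom_basis S O SX OX (fibre_set i U).
Proof. intros Hi HU; left; exists i, U; split; [auto | split; [auto | intro; tauto]]. Qed.

Lemma zoom_V_basis U : O U -> zoom_basis S O SX OX (zoom_V S O SX U).
Proof. intro HU; right; exists U; split; [auto | intro; tauto]. Qed.

Lemma zoom_basis_sub B : zoom_basis S O SX OX B -> subset B Z.
Proof.
  intros [[i [U [Hi [HU E]]]] | [U [HU E]]] z Hz; apply E in Hz.
  - destruct Hz as [x [Hx ->]]; split; [auto | exact (proj1 (HtX i Hi) U HU x Hx)].
  - destruct z as [y|[i x]]; simpl in *; [|tauto].
    split; [exact (proj1 HtY U HU y (proj1 Hz)) | tauto].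
Qed.

Definition zoom_set (B : set TY) (A : forall i, set (TX i)) : set (zoomT TY TX) :=
  fun z => match z with
  | inl y => S y /\ ~ isolated S O y /\ B y
  | inr s => isolated S O (projT1 s) /\ B (projT1 s) /\ SX _ (projT2 s) /\ A _ (projT2 s)
  end.

Lemma zoom_set_sub B A : subset (zoom_set B A) Z.
Proof. intros [y|[i x]]; simpl; tauto. Qed.

Lemma zoom_set_ext B B' A A' :
  (forall y, B y <-> B' y) -> (forall i, isolated S O i -> forall x, A i x <-> A' i x) ->
  forall z, zoom_set B A z <-> zoom_set B' A' z.
Proof.
  intros EB EA [y|[i x]]; simpl; rewrite EB; [tauto|].
  split; intros [Hi H]; rewrite (EA i Hi) in *; auto.
Qed.

Lemma zoom_set_forall {I : Type} (i0 : I) (Bs : I -> set TY) (As : forall i, I -> set (TX i)) z :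
  zoom_set (fun y => forall s, Bs s y) (fun i x => forall s, As i s x) z <->
  forall s, zoom_set (Bs s) (fun i => As i s) z.
Proof.
  destruct z as [y|[i x]]; simpl; split.
  - intros [Hy [Hn HB]] s; auto.
  - intro H; split; [apply (H i0)|]; split; [apply (H i0)|]; intro s; apply H.
  - intros [Hi [HB [Hx HA]]] s; auto.
  - intro H; split; [apply (H i0)|]; split; [intro s; apply H|].
    split; [apply (H i0) | intro s; apply H].
Qed.

Lemma zoom_set_exists {I J : Type} (j0 : J) (Bs : I -> set TY) (As : forall i, J -> set (TX i)) z :
  zoom_set (fun y => exists s, Bs s y) (fun i x => exists t, As i t x) z <->
  exists s t, zoom_set (Bs s) (fun i => As i t) z.
Proof.
  destruct z as [y|[i x]]; simpl; split.
  - intros [Hy [Hn [s HB]]]; exists s, j0; auto.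
  - intros [s [t [Hy [Hn HB]]]]; split; [|split]; eauto.
  - intros [Hi [[s HB] [Hx [t HA]]]]; exists s, t; auto.
  - intros [s [t [Hi [HB [Hx HA]]]]]; split; [|split; [|split]]; eauto.
Qed.

Lemma zoom_set_closed B A : closed_in S O B ->
  (forall i, isolated S O i -> closed_in (SX i) (OX i) (A i)) ->
  closed_in Z OZ (zoom_set B A).
Proof.
  intros [_ HBo] HA; split; [apply zoom_set_sub|].
  split; [intros z [Hz _]; exact Hz|].
  set (V := zoom_V S O SX (fun t => S t /\ ~ B t)).
  assert (HV : subset V (fun z => Z z /\ ~ zoom_set B A z))
    by (intros [y|[i x]]; simpl; tauto).
  intros z [Hz Hn].
  destruct (classic (V z)) as [HzV|HzV]; [exists V; split; [apply zoom_V_basis|]; auto|].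
  destruct z as [y|[i x]]; simpl in Hz, Hn, HzV; [exfalso; tauto|].
  destruct Hz as [Hi Hx]; destruct (HA i Hi) as [_ HAo].
  assert (HBi : B i) by (apply NNPP; intro HnB; apply HzV; split; [split; [apply Hi|]|]; auto).
  exists (fibre_set i (fun t => SX i t /\ ~ A i t)).
  split; [apply fibre_set_basis; auto | split; [exists x; split; [split|]; auto; tauto |]].
  intros z [x' [[Hx' Ha'] ->]]; simpl; tauto.
Qed.

Lemma zoom_set_Fclass a : forall B A, Fclass S O a B ->
  (forall i, isolated S O i -> Fclass (SX i) (OX i) a (A i)) ->
  Fclass Z OZ a (zoom_set B A).
Proof.
  induction (olt_wf a) as [a _ IH]; intros B A HB HA.
  destruct (classic (ozero a)) as [Hz|Hnz].
  { apply Fclass0; [exact Hz|].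
    apply zoom_set_closed; [exact (Fclass_ozero_closed S O a B Hz HB)|].
    intros i Hi; exact (Fclass_ozero_closed _ _ a _ Hz (HA i Hi)). }
  destruct (oeven_or_oodd a) as [He|Ho].
  - destruct (cofinal_below_exists a Hnz) as [lv Hlv].
    destruct (Fclass_even_cofinal S O HtY a lv B He Hnz Hlv HB) as [CB [HCB EB]].
    destruct (guarded_choice (isolated S O) (B := fun i => nat -> nat -> set (TX i))
      (fun i C => (forall n k, Fclass (SX i) (OX i) (lv k) (C n k)) /\
                  forall x, A i x <-> forall n k, C n k x)) as [CA HCA].
    { intro i; constructor; exact (fun _ _ _ => False). }
    { intros i Hi; apply (Fclass_even_cofinal _ _ (HtX i Hi) a); auto. }
    apply Fclass_even with (fun j => zoom_set (CB (cantor_fst j) (cantor_snd j))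
                                       (fun i => CA i (cantor_fst j) (cantor_snd j))); auto.
    + intro j; exists (lv (cantor_snd j)); split; [apply Hlv|].
      apply IH; [apply Hlv | apply HCB | intros i Hi; apply (HCA i Hi)].
    + intro z; etransitivity; [|apply (zoom_set_forall 0)].
      apply zoom_set_ext; [intro y; rewrite EB; apply forall_pairs|].
      intros i Hi x; rewrite (proj2 (HCA i Hi)); apply forall_pairs.
  - destruct Ho as [a b Hs Hb].
    destruct (Fclass_osucc_inv S O a b B Hs Hb HB) as [Bn [HBn EB]].
    destruct (guarded_choice (isolated S O) (B := fun i => nat -> set (TX i))
      (fun i C => (forall n, Fclass (SX i) (OX i) b (C n)) /\
                  forall x, A i x <-> exists n, C n x)) as [An HAn].
    { intro i; constructor; exact (fun _ _ => False). }
    { intros i Hi; eapply Fclass_osucc_inv; eauto. }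
    apply Fclass_odd with (fun j => zoom_set (Bn (cantor_fst j)) (fun i => An i (cantor_snd j))).
    + eapply oodd_succ; eauto.
    + intro j; exists b; split; [apply Hs|].
      apply IH; [apply Hs | apply HBn | intros i Hi; apply (HAn i Hi)].
    + intro z; etransitivity; [|apply (exists_pairs (fun n m => zoom_set (Bn n) (fun i => An i m) z))].
      etransitivity; [|apply (zoom_set_exists 0)].
      apply zoom_set_ext; [exact EB | intros i Hi; apply (HAn i Hi)].
Qed.

Lemma zoom_set_suslinF B A : suslinF S O B ->
  (forall i, isolated S O i -> suslinF (SX i) (OX i) (A i)) ->
  suslinF Z OZ (zoom_set B A).
Proof.
  intros [F [HF EF]] HA.
  destruct (guarded_choice (isolated S O) (B := fun i => list nat -> set (TX i))
    (fun i G => (forall s, s <> nil -> closed_in (SX i) (OX i) (G s)) /\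
       forall x, A i x <-> exists t : nat -> nat, forall k, G (map t (seq 0 (Nat.succ k))) x))
    as [G HG].
  { intro i; constructor; exact (fun _ _ => False). }
  { exact HA. }
  exists (fun s => zoom_set (F (map cantor_fst s)) (fun i => G i (map cantor_snd s))); split.
  - intros s Hs; apply zoom_set_closed.
    + apply HF; destruct s; [contradiction | discriminate].
    + intros i Hi; apply (HG i Hi); destruct s; [contradiction | discriminate].
  - intro z.
    transitivity (exists s t, forall k, zoom_set (F (map s (seq 0 (Nat.succ k))))
                                          (fun i => G i (map t (seq 0 (Nat.succ k)))) z).
    { etransitivity; [apply zoom_set_ext; [exact EF | intros i Hi; apply (HG i Hi)]|].
      etransitivity; [apply (zoom_set_exists (fun _ => 0))|].
      split; intros [s [t H]]; exists s, t; apply (zoom_set_forall 0); exact H. }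
    rewrite exists_seq_pairs.
    split; intros [r H]; exists r; intro k; specialize (H k); rewrite !map_map in *; exact H.
Qed.
End Zoom_sets.

Lemma isolated_dense_iff {T} (S : set T) (O : set (set T)) (Y : set T) y :
  is_topology S O -> (forall x, S x -> closed_in S O (fun z => z = x)) ->
  dense_in S O Y -> isolated Y (sub_top O Y) y <-> isolated S O y.
Proof.
  intros [HUS [_ [_ [_ Hcap]]]] HT1 [HYS Hdense]; split.
  - intros [HYy [U [HU E]]]; split; [exact (HYS y HYy)|].
    replace (fun z => z = y) with U; [exact HU|].
    apply set_ext; intro z; split; [|intros ->; apply E; split; auto].
    intro Hz; apply NNPP; intro Hzy.
    (* otherwise [U] minus [y] is a nonempty open set missing [Y] *)
    destruct (Hdense _ (Hcap _ _ HU (proj2 (HT1 y (HYS y HYy)))) (ex_intro _ z (conj Hz (conj (HUS U HU z Hz) Hzy))))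
      as [x [[HUx [_ Hxy]] HYx]].
    apply Hxy, E; auto.
  - intros [Hs Ho].
    destruct (Hdense _ Ho (ex_intro _ y eq_refl)) as [x [-> HYx]].
    split; [exact HYx|]; exists (fun z => z = y); split; [exact Ho|].
    intro z; split; [intros ->; auto | tauto].
Qed.

Section Zoom_of_subspaces.
Variables (TY : Type) (TX : TY -> Type)
  (SYt : set TY) (OYt : set (set TY)) (Y : set TY)
  (SXt : forall i, set (TX i)) (OXt : forall i, set (set (TX i)))
  (X : forall i, set (TX i)).
Hypotheses (hYt : tychonoff SYt OYt)
  (hY : dense_in SYt OYt Y)
  (hXt : forall i, isolated Y (sub_top OYt Y) i -> tychonoff (SXt i) (OXt i))
  (hX : forall i, isolated Y (sub_top OYt Y) i -> subset (X i) (SXt i))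
  (hXne : forall i, isolated Y (sub_top OYt Y) i -> exists x, X i x).

Let OY := sub_top OYt Y.
Let OX i := sub_top (OXt i) (X i).
Let Zs := zoom_carrier Y OY X.
Let Zt := zoom_carrier SYt OYt SXt.
Let OZt := zoom_open SYt OYt SXt OXt.

Lemma isolated_sub_iff y : isolated Y OY y <-> isolated SYt OYt y.
Proof. apply isolated_dense_iff; [apply hYt | apply hYt | exact hY]. Qed.

Lemma top_Yt : is_topology SYt OYt.
Proof. apply hYt. Qed.

Lemma top_Xt i : isolated SYt OYt i -> is_topology (SXt i) (OXt i).
Proof. intro Hi; apply hXt, isolated_sub_iff, Hi. Qed.

Lemma isolated_in_Y i : isolated SYt OYt i -> Y i.
Proof. intro Hi; apply isolated_sub_iff in Hi; apply Hi. Qed.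

Lemma X_sub i : isolated SYt OYt i -> subset (X i) (SXt i).
Proof. intro Hi; apply hX, isolated_sub_iff, Hi. Qed.

Lemma zoom_carrier_sub : subset Zs Zt.
Proof.
  intros [y|[i x]]; simpl; rewrite isolated_sub_iff; [|intros [Hi Hx]; split; auto; apply X_sub; auto].
  intros [HY Hn]; split; [apply hY, HY | exact Hn].
Qed.

Lemma zoom_carrier_eq_zoom_set : Zs = zoom_set SYt OYt SXt Y X.
Proof.
  apply set_ext; intros [y|[i x]]; simpl; rewrite isolated_sub_iff; split.
  - intros [HY Hn]; split; [apply hY, HY | auto].
  - tauto.
  - intros [Hi Hx]; split; [auto | split; [apply isolated_in_Y; auto | split; [apply X_sub|]; auto]].
  - tauto.
Qed.

Lemma zoom_V_trace V Vt : (forall y, V y <-> Y y /\ Vt y) ->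
  forall z, zoom_V Y OY X V z <-> Zs z /\ zoom_V SYt OYt SXt Vt z.
Proof.
  intros EV [y|[i x]]; simpl; rewrite EV, isolated_sub_iff; [tauto|].
  split.
  - intros [[HY HV] [Hi Hx]]; split; [auto | split; [auto | split; [auto | apply X_sub; auto]]].
  - intros [[Hi Hx] [HV _]]; split; [split; [apply isolated_in_Y|]|]; auto.
Qed.

Lemma fibre_set_trace i U Ut : isolated SYt OYt i -> (forall x, U x <-> X i x /\ Ut x) ->
  forall z, fibre_set i U z <-> Zs z /\ fibre_set i Ut z.
Proof.
  intros Hi EU z; split.
  - intros [x [Hx ->]]; apply EU in Hx as [HXx HUx]; split; [|exists x; auto].
    split; [apply isolated_sub_iff; auto | auto].
  - intros [HZ [x [Hx ->]]]; exists x; split; [apply EU; split; [apply HZ|]|]; auto.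
Qed.

Lemma zoom_basis_trace_up B : zoom_basis Y OY X OX B ->
  exists Bt, zoom_basis SYt OYt SXt OXt Bt /\ forall z, B z <-> Zs z /\ Bt z.
Proof.
  intros [[i [U [Hi [[Ut [HUt EU]] E]]]] | [V [[Vt [HVt EV]] E]]].
  - apply isolated_sub_iff in Hi; exists (fibre_set i Ut); split.
    + apply fibre_set_basis; auto.
    + intro z; rewrite E; apply fibre_set_trace; auto.
  - exists (zoom_V SYt OYt SXt Vt); split.
    + apply zoom_V_basis; auto.
    + intro z; rewrite E; apply zoom_V_trace; auto.
Qed.

Lemma zoom_basis_trace_down Bt : zoom_basis SYt OYt SXt OXt Bt ->
  exists B, zoom_basis Y OY X OX B /\ forall z, B z <-> Zs z /\ Bt z.
Proof.
  intros [[i [Ut [Hi [HUt E]]]] | [Vt [HVt E]]].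
  - exists (fibre_set i (fun x => X i x /\ Ut x)); split.
    + apply fibre_set_basis; [apply isolated_sub_iff; auto | exists Ut; split; [auto | tauto]].
    + intro z; rewrite E; apply fibre_set_trace; tauto.
  - exists (zoom_V Y OY X (fun y => Y y /\ Vt y)); split.
    + apply zoom_V_basis; exists Vt; split; [auto | tauto].
    + intro z; rewrite E; apply zoom_V_trace; tauto.
Qed.

Lemma zoom_open_sub_top W : zoom_open Y OY X OX W <-> sub_top OZt Zs W.
Proof.
  apply basis_open_sub_top; [|exact zoom_basis_trace_up | exact zoom_basis_trace_down].
  apply zoom_basis_sub; [exact top_Yt | exact top_Xt].
Qed.

(* A continuous map [Y~ -> Z~] whose preimage of [Z(Y, X)] is [Y]. *)
Definition zoom_section (y : TY) : zoomT TY TX :=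
  match excluded_middle_informative (exists x, isolated SYt OYt y /\ X y x) with
  | left H => inr (existT _ y (proj1_sig (constructive_indefinite_description _ H)))
  | right _ => inl y
  end.

Lemma zoom_section_isolated y : isolated SYt OYt y ->
  exists x, X y x /\ zoom_section y = inr (existT _ y x).
Proof.
  intro Hi; unfold zoom_section; destruct excluded_middle_informative as [H|H].
  - exists (proj1_sig (constructive_indefinite_description _ H)); split; [|reflexivity].
    exact (proj2 (proj2_sig (constructive_indefinite_description _ H))).
  - exfalso; destruct (hXne y (proj2 (isolated_sub_iff y) Hi)) as [x Hx]; eauto.
Qed.

Lemma zoom_section_not_isolated y : ~ isolated SYt OYt y -> zoom_section y = inl y.
Proof.
  intro Hi; unfold zoom_section; destruct excluded_middle_informative as [H|H];
    [exfalso; destruct H as [x [H _]]; auto | reflexivity].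
Qed.

Lemma zoom_section_V Vt y : Vt y -> SYt y -> zoom_V SYt OYt SXt Vt (zoom_section y).
Proof.
  intros HV Hy; destruct (classic (isolated SYt OYt y)) as [Hi|Hi].
  - destruct (zoom_section_isolated y Hi) as [x [Hx ->]]; simpl.
    split; [|split; [|apply X_sub]]; auto.
  - rewrite zoom_section_not_isolated; simpl; auto.
Qed.

Lemma zoom_section_carrier y : SYt y -> Zt (zoom_section y).
Proof.
  intro Hy; destruct (classic (isolated SYt OYt y)) as [Hi|Hi].
  - destruct (zoom_section_isolated y Hi) as [x [Hx ->]]; split; [|apply X_sub]; auto.
  - rewrite zoom_section_not_isolated; simpl; auto.
Qed.

Lemma zoom_section_continuous U : OZt U -> OYt (fun y => SYt y /\ U (zoom_section y)).
Proof.
  intros [_ HUb]; apply (open_of_local SYt); [exact top_Yt|].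
  intros y [Hy HU]; destruct (classic (isolated SYt OYt y)) as [Hi|Hi].
  - exists (fun z => z = y); split; [apply Hi | split; [reflexivity | intros z ->; auto]].
  - rewrite zoom_section_not_isolated in HU by exact Hi.
    destruct (HUb _ HU) as [B [[[i [V [_ [_ EB]]]] | [V [HV EB]]] [HzB HBU]]];
      apply EB in HzB; [destruct HzB as [x [_ Habs]]; discriminate|].
    exists V; split; [exact HV | split; [apply HzB|]].
    intros u Hu; assert (HuS : SYt u) by exact (proj1 top_Yt V HV u Hu).
    split; [exact HuS | apply HBU, EB, zoom_section_V; auto].
Qed.

Lemma Y_preim_section : Y = preim SYt zoom_section Zs.
Proof.
  apply set_ext; intro y; unfold preim; split.
  - intro HY; split; [apply hY, HY|].
    destruct (classic (isolated SYt OYt y)) as [Hi|Hi].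
    + destruct (zoom_section_isolated y Hi) as [x [Hx ->]]; split; [apply isolated_sub_iff|]; auto.
    + rewrite zoom_section_not_isolated by exact Hi; split; [exact HY | rewrite isolated_sub_iff; exact Hi].
  - intros [Hy Hz]; destruct (classic (isolated SYt OYt y)) as [Hi|Hi].
    + apply isolated_in_Y, Hi.
    + rewrite zoom_section_not_isolated in Hz by exact Hi; apply Hz.
Qed.

Lemma fibre_continuous i U : isolated SYt OYt i -> OZt U ->
  OXt i (fun x => SXt i x /\ U (inr (existT TX i x))).
Proof.
  intros Hi [_ HUb]; apply (open_of_local (SXt i)); [apply top_Xt, Hi|].
  intros x [Hx HU]; destruct (HUb _ HU) as [B [HB [HzB HBU]]].
  destruct HB as [[i' [V [_ [HV EB]]]] | [V [HV EB]]]; apply EB in HzB.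
  - destruct HzB as [x' [Hx' Heq]].
    injection Heq as Ei Heq; subst i'.
    apply Eqdep.EqdepTheory.inj_pair2 in Heq; subst x'.
    exists V; split; [exact HV | split; [exact Hx'|]].
    intros u Hu; split; [exact (proj1 (top_Xt i Hi) V HV u Hu) | apply HBU, EB; exists u; auto].
  - exists (SXt i); split; [apply top_Xt, Hi | split; [exact Hx|]].
    intros u Hu; split; [exact Hu | apply HBU, EB; simpl in *; tauto].
Qed.

Lemma X_preim_fibre i : isolated SYt OYt i -> X i = preim (SXt i) (fun x => inr (existT TX i x)) Zs.
Proof.
  intro Hi; apply set_ext; intro x; unfold preim; simpl; split; [|tauto].
  intro Hx; split; [apply X_sub; auto | split; [apply isolated_sub_iff|]; auto].
Qed.

Lemma Fw_Y_of_zoom a : Fw Zt OZt a Zs -> Fw SYt OYt a Y.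
Proof.
  rewrite Y_preim_section; apply Fw_preim;
    [exact zoom_section_carrier | exact zoom_section_continuous].
Qed.

Lemma Fw_X_of_zoom a i : isolated Y OY i -> Fw Zt OZt a Zs -> Fw (SXt i) (OXt i) a (X i).
Proof.
  intro Hi; apply isolated_sub_iff in Hi; rewrite (X_preim_fibre i Hi).
  apply Fw_preim; [intros x Hx; split; auto | intros U HU; apply fibre_continuous; auto].
Qed.

Lemma Fclass_zoom_of a : Fclass SYt OYt a Y ->
  (forall i, isolated Y OY i -> Fclass (SXt i) (OXt i) a (X i)) -> Fclass Zt OZt a Zs.
Proof.
  intros HY HX; rewrite zoom_carrier_eq_zoom_set.
  apply zoom_set_Fclass; [exact top_Yt | exact top_Xt | exact HY |].
  intros i Hi; apply HX, isolated_sub_iff, Hi.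
Qed.

Lemma suslinF_zoom_of : suslinF SYt OYt Y ->
  (forall i, isolated Y OY i -> suslinF (SXt i) (OXt i) (X i)) -> suslinF Zt OZt Zs.
Proof.
  intros HY HX; rewrite zoom_carrier_eq_zoom_set.
  apply zoom_set_suslinF; [exact HY|].
  intros i Hi; apply HX, isolated_sub_iff, Hi.
Qed.
End Zoom_of_subspaces.

Theorem proposition4p3
  (TY : Type) (TX : TY -> Type)
  (SYt : set TY) (OYt : set (set TY)) (Y : set TY)
  (SXt : forall i, set (TX i)) (OXt : forall i, set (set (TX i)))
  (X : forall i, set (TX i))
  (hYt : tychonoff SYt OYt)
  (hY : dense_in SYt OYt Y)
  (hXt : forall i, isolated Y (sub_top OYt Y) i -> tychonoff (SXt i) (OXt i))
  (hX : forall i, isolated Y (sub_top OYt Y) i -> subset (X i) (SXt i))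
  (hXne : forall i, isolated Y (sub_top OYt Y) i -> exists x, X i x) :
  let OY := sub_top OYt Y in
  let OX := fun i => sub_top (OXt i) (X i) in
  let Zs := zoom_carrier Y OY X in
  let Zt := zoom_carrier SYt OYt SXt in
  let OZt := zoom_open SYt OYt SXt OXt in
  (subset Zs Zt /\
   forall W, zoom_open Y OY X OX W <-> sub_top OZt Zs W) /\
  (compl_defined Zt OZt Zs <->
     (compl_defined SYt OYt Y /\
      forall i, isolated Y OY i -> compl_defined (SXt i) (OXt i) (X i))) /\
  (forall (c cY : ordw1) (cX : TY -> ordw1),
     is_compl Zt OZt Zs c ->
     is_compl SYt OYt Y cY ->
     (forall i, isolated Y OY i -> is_compl (SXt i) (OXt i) (X i) (cX i)) ->
     ole1 cY c /\ (forall i, isolated Y OY i -> ole1 (cX i) c) /\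
     (forall d, ole1 cY d -> (forall i, isolated Y OY i -> ole1 (cX i) d) ->
        ole1 c d)).
Proof.
  intros OY OX Zs Zt OZt.
  assert (HY : forall a, Fw Zt OZt a Zs -> Fw SYt OYt a Y) by (eapply Fw_Y_of_zoom; eauto).
  assert (HX : forall a i, isolated Y OY i -> Fw Zt OZt a Zs -> Fw (SXt i) (OXt i) a (X i))
    by (eapply Fw_X_of_zoom; eauto).
  split; [split; [eapply zoom_carrier_sub | eapply zoom_open_sub_top]; eauto|].
  split; [split|].
  - intro HZ; split; [exact (HY None HZ) | intros i Hi; exact (HX None i Hi HZ)].
  - intros [HYd HXd]; eapply suslinF_zoom_of; eauto.
  - intros c cY cX Hc HcY HcX; split; [|split].
    + apply (proj2 HcY), HY, (proj1 Hc).
    + intros i Hi; apply (proj2 (HcX i Hi)), (HX _ i Hi), (proj1 Hc).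
    + intros [d|] HdY HdX; [|destruct c; exact I].
      apply (proj2 Hc); simpl; eapply Fclass_zoom_of; eauto.
      * destruct cY as [cy|]; [|contradiction].
        exact (Fclass_mono _ _ cy d Y (proj1 HcY) HdY).
      * intros i Hi; specialize (HdX i Hi); destruct (HcX i Hi) as [HXi _].
        destruct (cX i) as [cx|]; [|contradiction].
        exact (Fclass_mono _ _ cx d _ HXi HdX).
Qed.
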